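(* There is a constant $c$ such that for every $\ell\in\mathbb N$ and every finite alphabet $\Gamma_2$ disjoint from $\Gamma_1=\{0,1,\mathsf{inc},\mathsf{dec}\}$, there are $\ell$ DFAs $B_1,\dots,B_\ell$ over $\Gamma_1\cup\Gamma_2$, each with at most $c\cdot\ell$ states, such that $L_\ell=\bigcap_{i=1}^{\ell}L(B_i)$.
   Context: For a word $b_1b_2\cdots b_\ell\in\{0,1\}^\ell$ let $\mathsf{val}(b_1\cdots b_\ell)=\sum_i b_i 2^{\ell-i}$. Interpret $\mathsf{inc}(n)=n+1$, $\mathsf{dec}(n)=n-1$ and $a(n)=n$ for $a\in\Gamma_2$. Then $L_\ell$ is the set of words $n_0o_1n_1o_2n_2\cdots o_kn_k$ with $k\ge 0$, each $n_i\in\{0,1\}^\ell$, each $o_i\in\{\mathsf{inc},\mathsf{dec}\}\cup\Gamma_2$, and $\mathsf{val}(n_i)\equiv o_i(\mathsf{val}(n_{i-1}))\pmod{2^\ell}$ for all $0<i\le k$. *)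

From HB Require Import structures.
From mathcomp Require Import all_boot all_order all_algebra.
Set Implicit Arguments. Unset Strict Implicit. Unset Printing Implicit Defensive.
Import Order.TTheory GRing.Theory Num.Theory.

Inductive gamma1 := Zero | One | Inc | Dec.

Definition gamma1_code (a : gamma1) : 'I_4 :=
  match a with Zero => inord 0 | One => inord 1 | Inc => inord 2 | Dec => inord 3 end.
Definition gamma1_decode (i : 'I_4) : gamma1 :=
  match val i with 0 => Zero | 1 => One | 2 => Inc | _ => Dec end.
Lemma gamma1_codeK : cancel gamma1_code gamma1_decode.
Proof. by case; rewrite /gamma1_decode /= inordK. Qed.
HB.instance Definition _ := Finite.copy gamma1 (can_type gamma1_codeK).

(* The full alphabet Gamma_1 ∪ Gamma_2, Gamma_2 disjoint from Gamma_1: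
   realised as a disjoint sum. *)
Definition alphabet (G2 : finType) : finType := (gamma1 + G2)%type.

Record dfa (A : finType) := DFA {
  dfa_state : finType;
  dfa_init  : dfa_state;
  dfa_trans : dfa_state -> A -> dfa_state;
  dfa_final : {set dfa_state}
}.

Definition dfa_accept (A : finType) (B : dfa A) (w : seq A) : bool :=
  foldl (@dfa_trans A B) (@dfa_init A B) w \in @dfa_final A B.

(* val(b_1 ... b_l) = sum_i b_i 2^(l-i) *)
Definition bval (s : seq bool) : nat := foldl (fun acc (b : bool) => acc.*2 + b) 0 s.

Definition enc_block (G2 : finType) (s : seq bool) : seq (alphabet G2) :=
  [seq (inl (if b then One else Zero) : alphabet G2) | b <- s].

Definition op_sem (G2 : finType) (o : alphabet G2) : option (int -> int) :=
  match o with
  | inl Inc => Some (fun n => n + 1)%R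
  | inl Dec => Some (fun n => n - 1)%R
  | inl _ => None
  | inr _ => Some (fun n => n)
  end.

Definition step_ok (G2 : finType) (l : nat) (prev : seq bool)
    (on : alphabet G2 * seq bool) : Prop :=
  [/\ size on.2 = l &
      exists f, op_sem on.1 = Some f /\
        ((bval on.2)%:Z = f (bval prev)%:Z %[mod (2 ^ l)%:Z])%Z ].

Fixpoint chain_ok (G2 : finType) (l : nat) (prev : seq bool)
    (rest : seq (alphabet G2 * seq bool)) : Prop :=
  match rest with
  | [::] => True
  | on :: rest' => step_ok l prev on /\ chain_ok l on.2 rest'
  end.

Definition L_lang (G2 : finType) (l : nat) (w : seq (alphabet G2)) : Prop :=
  exists (n0 : seq bool) (rest : seq (alphabet G2 * seq bool)),
    [/\ size n0 = l, chain_ok l n0 rest &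
        w = enc_block G2 n0 ++ flatten [seq on.1 :: enc_block G2 on.2 | on <- rest]].

From HB Require Import structures.
From mathcomp Require Import all_boot all_order all_algebra.
From mathcomp Require Import zify.

(* Bit j of n + 1 (mod 2^l) is bit j of n, flipped exactly when all less
   significant bits of n are 1; for n - 1 it is flipped exactly when they are
   all 0.  Hence val(n_i) = o_i(val(n_{i-1})) (mod 2^l) is the conjunction over
   j < l of a condition that only involves bit j of n_i, bit j of n_{i-1}, and
   whether the bits of n_{i-1} after j are all 1 or all 0.  The automaton B_j
   checks this j-th condition: inside a block it tracks the position (< l),
   the bit j expected from the previous block and operation, bit j itself and
   the two "all 1 / all 0 after j" flags, so it has 24 l + 9 states. *)

Set Implicit Arguments.
Unset Strict Implicit.
Unset Printing Implicit Defensive.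

Lemma foldl_bval (s : seq bool) acc :
  foldl (fun acc (b : bool) => acc.*2 + b) acc s = acc * 2 ^ size s + bval s.
Proof.
elim: s acc => [|b s IH] acc /=; first by rewrite /bval /= muln1 addn0.
by rewrite /bval /= IH [in RHS]IH expnS; lia.
Qed.

Lemma bval_cons (b : bool) s : bval (b :: s) = b * 2 ^ size s + bval s.
Proof. by rewrite /bval /= foldl_bval. Qed.

Lemma bval_lt s : bval s < 2 ^ size s.
Proof. by elim: s => [|b s IH] //; rewrite bval_cons /= expnS; case: b => /=; lia. Qed.

Lemma bval_inj s t : size s = size t -> bval s = bval t -> s = t.
Proof.
elim: s t => [|a s IH] [|b t] //= [st]; rewrite !bval_cons st => eq_st.
have := bval_lt s; have := bval_lt t; rewrite st => lt_t lt_s.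
have eq_ab : a = b by case: a b eq_st => [] [] /=; lia.
by rewrite eq_ab (IH t) //; move: eq_st; rewrite eq_ab; lia.
Qed.

Lemma bval_eqmod_inj s t :
  size s = size t -> ((bval s)%:Z = (bval t)%:Z %[mod (2 ^ size t)%:Z])%Z -> s = t.
Proof.
move=> st; have := bval_lt s; rewrite st => lt_s.
by rewrite !modz_nat !modn_small ?bval_lt // => -[]; apply: bval_inj.
Qed.

Lemma all_trueE s : all id s = ((bval s).+1 == 2 ^ size s).
Proof.
elim: s => [|b s IH] //=; rewrite IH bval_cons expnS.
by have := bval_lt s; case: b => /=; lia.
Qed.

Lemma all_falseE s : all negb s = (bval s == 0).
Proof.
elim: s => [|b s IH] //=; rewrite IH bval_cons.
by have := bval_lt s; case: b => /=; lia.
Qed.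

(* Blocks are big-endian: the bits after position [k] are the less significant ones. *)
Fixpoint succb (s : seq bool) : seq bool :=
  if s is x :: s' then (x (+) all id s') :: succb s' else [::].
Fixpoint predb (s : seq bool) : seq bool :=
  if s is x :: s' then (x (+) all negb s') :: predb s' else [::].

Lemma size_succb s : size (succb s) = size s.
Proof. by elim: s => //= x s ->. Qed.

Lemma size_predb s : size (predb s) = size s.
Proof. by elim: s => //= x s ->. Qed.

Lemma nth_succb s k :
  k < size s -> nth false (succb s) k = nth false s k (+) all id (drop k.+1 s).
Proof. by elim: s k => [|x s IH] [|k] //= lt_ks; [rewrite drop0 | exact: IH]. Qed.

Lemma nth_predb s k :
  k < size s -> nth false (predb s) k = nth false s k (+) all negb (drop k.+1 s).
Proof. by elim: s k => [|x s IH] [|k] //= lt_ks; [rewrite drop0 | exact: IH]. Qed.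

Lemma bval_succb s : bval (succb s) = (bval s).+1 %% 2 ^ size s.
Proof.
elim: s => [|x s IH] //=; rewrite !bval_cons size_succb IH all_trueE expnS.
have := bval_lt s; have : 0 < 2 ^ size s by rewrite expn_gt0.
move: (2 ^ size s) => N N_gt0 lt_sN {IH}.
case: eqP => [eq_sN | ne_sN]; last first.
  by rewrite addbF !modn_small //; case: x => /=; lia.
rewrite eq_sN modnn; case: x => /=; last by rewrite modn_small; lia.
have -> : (1 * N + bval s).+1 = 2 * N by lia.
by rewrite modnn.
Qed.

Lemma bval_predb s : bval (predb s) = (bval s + 2 ^ size s).-1 %% 2 ^ size s.
Proof.
elim: s => [|x s IH] //=; rewrite !bval_cons size_predb IH all_falseE expnS.
have := bval_lt s; have : 0 < 2 ^ size s by rewrite expn_gt0.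
move: (2 ^ size s) => N N_gt0 lt_sN {IH}.
case: eqP => [-> | ne_s0].
  rewrite add0n (modn_small (m := N.-1)); last lia.
  case: x => /=; last by rewrite modn_small; lia.
  have -> : (1 * N + 0 + 2 * N).-1 = 2 * N + N.-1 by lia.
  by rewrite modnDl modn_small //; lia.
have -> : (bval s + N).-1 = N + (bval s).-1 by lia.
have -> : (x * N + bval s + 2 * N).-1 = 2 * N + (x * N + (bval s).-1) by lia.
by rewrite addbF !modnDl !modn_small; case: x => /=; lia.
Qed.

Section Operations.
Variable G2 : finType.
Implicit Types (c : alphabet G2) (s prev : seq bool).

Definition is_op c : bool := op_sem c.

Definition next_block c s : seq bool :=
  match c with inl Inc => succb s | inl Dec => predb s | _ => s end.

Definition next_bit c (x o z : bool) : bool :=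
  match c with inl Inc => x (+) o | inl Dec => x (+) z | _ => x end.

Lemma size_next_block c s : size (next_block c s) = size s.
Proof. by case: c => [[]|] //=; rewrite (size_succb, size_predb). Qed.

Lemma nth_next_block c s k : k < size s ->
  nth false (next_block c s) k =
  next_bit c (nth false s k) (all id (drop k.+1 s)) (all negb (drop k.+1 s)).
Proof. by case: c => [[]|] //=; [apply: nth_succb | apply: nth_predb]. Qed.

Lemma bval_next_block c f s : op_sem c = Some f ->
  ((bval (next_block c s))%:Z = f (bval s)%:Z %[mod (2 ^ size s)%:Z])%Z.
Proof.
have N_gt0 : 0 < 2 ^ size s by rewrite expn_gt0.
case: c => [[]|g] //= [<-] //.
  rewrite bval_succb modz_nat modn_mod -modz_nat.
  by congr (_ %% _)%Z; lia.
rewrite bval_predb modz_nat modn_mod -modz_nat -(modzDr ((bval s)%:Z - 1)).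
by congr (_ %% _)%Z; lia.
Qed.

Lemma step_okE l prev c a : size prev = l ->
  step_ok l prev (c, a) <-> is_op c /\ a = next_block c prev.
Proof.
rewrite /step_ok /is_op /= => <-; split.
  case=> size_a [f [op_f eq_a]]; rewrite op_f; split=> //.
  apply: bval_eqmod_inj; first by rewrite size_next_block.
  by rewrite size_next_block eq_a; apply/esym/bval_next_block.
move=> [op_c ->]; case op_f: (op_sem c) op_c => [f|] // _.
split; first exact: size_next_block.
by exists f; split; last exact: bval_next_block.
Qed.

Definition enc_chain (rest : seq (alphabet G2 * seq bool)) : seq (alphabet G2) :=
  flatten [seq on.1 :: enc_block G2 on.2 | on <- rest].

Fixpoint chain_bit_ok k prev (rest : seq (alphabet G2 * seq bool)) : bool :=
  if rest is (c, a) :: rest' then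
    [&& is_op c,
        nth false a k == next_bit c (nth false prev k)
                           (all id (drop k.+1 prev)) (all negb (drop k.+1 prev))
      & chain_bit_ok k a rest']
  else true.

Lemma chain_okE l prev rest : 0 < l -> size prev = l ->
  chain_ok l prev rest <->
  all (fun on => size on.2 == l) rest /\ forall k, k < l -> chain_bit_ok k prev rest.
Proof.
move=> l_gt0; elim: rest prev => [|[c a] rest IH] prev size_prev /=; first by [].
rewrite step_okE //; split.
  case=> -[op_c ->] /IH[|sizes bits]; first by rewrite size_next_block.
  rewrite size_next_block size_prev eqxx; split=> // k lt_kl.
  by rewrite op_c nth_next_block ?size_prev // eqxx bits.
case=> /andP[/eqP size_a sizes] bits.
have op_c : is_op c by case/and3P: (bits 0 l_gt0).
split; last by apply/IH => //; split=> // k /bits /and3P[].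
split=> //; apply: (@eq_from_nth _ false); first by rewrite size_next_block size_a.
move=> k; rewrite size_a => lt_kl.
by rewrite nth_next_block ?size_prev //; case/and3P: (bits k lt_kl) => _ /eqP.
Qed.

End Operations.

Section BitAutomaton.
Variables (G2 : finType) (l j : nat).

Definition bit_state : finType :=
  option (('I_l * option bool * bool * bool * bool) + (bool * bool * bool)).

Definition between x o z : bit_state := Some (inr (x, o, z)).

(* [in_block p e x o z]: position [p] in the current block, [e] the bit [j]
   required by the previous block and operation ([None] in the first block),
   [x] the bit [j] read so far, [o]/[z] whether all bits read after position
   [j] are 1/0.  At [p = l] the block is complete and the state is [between].
   [None] is the rejecting sink. *)
Definition in_block (p : nat) e x o z : bit_state :=
  if insub p is Some q then Some (inl (q, e, x, o, z)) else between x o z.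

Definition block_step (p : 'I_l) e x o z (b : bool) : bit_state :=
  if p < j then in_block p.+1 e x o z
  else if val p == j then
    (if odflt b e == b then in_block p.+1 e b true true else None)
  else in_block p.+1 e x (o && b) (z && ~~ b).

Definition bit_trans (st : bit_state) (c : alphabet G2) : bit_state :=
  match st, c with
  | Some (inl (p, e, x, o, z)), inl Zero => block_step p e x o z false
  | Some (inl (p, e, x, o, z)), inl One => block_step p e x o z true
  | Some (inr (x, o, z)), _ =>
      if is_op c then in_block 0 (Some (next_bit c x o z)) false true true else None
  | _, _ => None
  end.

Definition bit_final : {set bit_state} :=
  [set st | if st is Some (inr _) then true else false].

Definition bit_dfa : dfa (alphabet G2) :=
  @DFA _ bit_state (in_block 0 None false true true) bit_trans bit_final.

Lemma card_bit_state : #|bit_state| = 24 * l + 9.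
Proof. by rewrite card_option card_sum !card_prod card_ord !card_option !card_bool; lia. Qed.

Lemma foldl_bit_dead w : foldl bit_trans None w = None.
Proof. by elim: w. Qed.

Lemma bit_trans_in_block p e x o z b (lt_pl : p < l) :
  bit_trans (in_block p e x o z) (inl (if b then One else Zero)) =
  block_step (Ordinal lt_pl) e x o z b.
Proof. by rewrite /in_block insubT; case: b. Qed.

Definition block_pos (st : bit_state) : nat :=
  if st is Some (inl (p, _, _, _, _)) then val p else l.

Lemma block_pos_in p e x o z : p <= l -> block_pos (in_block p e x o z) = p.
Proof.
rewrite /in_block; case: insubP => [q _ <- // | ].
by rewrite -leqNgt => le_lp le_pl; apply/eqP; rewrite eqn_leq le_lp le_pl.
Qed.

Lemma block_stepP p e x o z b :
  block_step p e x o z b = None \/ block_pos (block_step p e x o z b) = p.+1.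
Proof.
have lt_pl := ltn_ord p.
rewrite /block_step; repeat case: ifP => _.
all: by [left | right; rewrite block_pos_in].
Qed.

Lemma bit_run_split st w : foldl bit_trans st w \in bit_final ->
  exists s rest, [/\ block_pos st + size s = l,
    all (fun on => size on.2 == l) rest & w = enc_block G2 s ++ enc_chain rest].
Proof.
elim: w st => [|c w IH] [[[[[[p e] x] o] z] | [[x o] z]] |] /=.
- by rewrite inE.
- by exists [::], [::]; rewrite addn0.
- by rewrite inE.
- have step b : foldl bit_trans (block_step p e x o z b) w \in bit_final ->
      exists s rest, [/\ p + size s = l, all (fun on => size on.2 == l) rest &
        inl (if b then One else Zero) :: w = enc_block G2 s ++ enc_chain rest].
    case: (block_stepP p e x o z b) => [-> | pos_step]; first by rewrite foldl_bit_dead inE.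
    move=> /IH[s [rest [pos_s sizes ->]]]; rewrite pos_step in pos_s.
    by exists (b :: s), rest; split; rewrite //= addnS -addSn.
  by case: c => [[]|g]; [exact: step | exact: step | rewrite /= foldl_bit_dead inE ..].
- case: (is_op c); last by rewrite foldl_bit_dead inE.
  move=> /IH[s [rest [pos_s sizes ->]]]; rewrite block_pos_in // add0n in pos_s.
  by exists [::], ((c, s) :: rest); rewrite /= addn0 pos_s eqxx.
- by rewrite foldl_bit_dead inE.
Qed.

Lemma bit_accept_split w : dfa_accept bit_dfa w ->
  exists n0 rest, [/\ size n0 = l,
    all (fun on => size on.2 == l) rest & w = enc_block G2 n0 ++ enc_chain rest].
Proof. by move=> /bit_run_split; rewrite block_pos_in. Qed.

Hypothesis lt_jl : j < l.

Lemma bit_run_after p e x o z s : j < p -> p + size s = l ->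
  foldl bit_trans (in_block p e x o z) (enc_block G2 s) =
  between x (o && all id s) (z && all negb s).
Proof.
elim: s p o z => [|b s IH] p o z lt_jp /=.
  by rewrite addn0 => eq_pl; rewrite /in_block insubF ?eq_pl ?ltnn // !andbT.
move=> eq_pl; have lt_pl : p < l by rewrite -eq_pl -addSnnS leq_addr.
rewrite bit_trans_in_block /block_step /= ltnNge ltnW //= gtn_eqF //.
by rewrite IH ?addSnnS // -?andbA; [case: b | apply: ltnW].
Qed.

Lemma bit_run_upto p e x o z s : p <= j -> p + size s = l ->
  foldl bit_trans (in_block p e x o z) (enc_block G2 s) =
  let b := nth false s (j - p) in
  if odflt b e == b then between b (all id (drop (j - p).+1 s)) (all negb (drop (j - p).+1 s))
  else None.
Proof.
elim: s p x o z => [|b s IH] p x o z le_pj /=; first by move=> eq_pl; lia.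
move=> eq_pl; have lt_pl : p < l by lia.
rewrite bit_trans_in_block /block_step /=.
case: ltngtP le_pj => // [lt_pj | eq_pj] _.
  have -> : j - p = (j - p.+1).+1 by lia.
  by rewrite IH ?addSnnS.
rewrite eq_pj subnn /= drop0; case: eqP => _; last exact: foldl_bit_dead.
by rewrite bit_run_after //; lia.
Qed.

Definition after_block (s : seq bool) : bit_state :=
  between (nth false s j) (all id (drop j.+1 s)) (all negb (drop j.+1 s)).

Lemma bit_run_block e s : size s = l ->
  foldl bit_trans (in_block 0 e false true true) (enc_block G2 s) =
  if odflt (nth false s j) e == nth false s j then after_block s else None.
Proof. by move=> size_s; rewrite bit_run_upto ?size_s // subn0. Qed.

Lemma bit_run_chain prev rest : all (fun on => size on.2 == l) rest ->
  (foldl bit_trans (after_block prev) (enc_chain rest) \in bit_final) =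
  chain_bit_ok j prev rest.
Proof.
elim: rest prev => [|[c a] rest IH] prev /=; first by rewrite inE.
move=> /andP[/eqP size_a sizes]; rewrite foldl_cat /=.
case: (is_op c); last by rewrite !foldl_bit_dead inE.
rewrite bit_run_block //= eq_sym.
by case: (_ == _); [exact: IH | rewrite foldl_bit_dead inE].
Qed.

Lemma bit_accept_chainE n0 rest : size n0 = l -> all (fun on => size on.2 == l) rest ->
  dfa_accept bit_dfa (enc_block G2 n0 ++ enc_chain rest) = chain_bit_ok j n0 rest.
Proof.
move=> size_n0 sizes; rewrite /dfa_accept foldl_cat /= bit_run_block // eqxx.
exact: bit_run_chain.
Qed.

End BitAutomaton.

Theorem claim4p7 :
  exists c : nat, forall (l : nat), 0 < l -> forall (G2 : finType),
    exists B : 'I_l -> dfa (alphabet G2),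
      (forall i, #|@dfa_state _ (B i)| <= c * l) /\
      (forall w : seq (alphabet G2), L_lang l w <-> (forall i, dfa_accept (B i) w)).
Proof.
exists 33 => l l_gt0 G2; exists (fun i : 'I_l => bit_dfa G2 l i); split=> [i | w].
  by rewrite /= card_bit_state; lia.
split=> [[n0 [rest [size_n0 chain ->]]] i | accept].
  have [sizes bits] := (chain_okE rest l_gt0 size_n0).1 chain.
  by rewrite (bit_accept_chainE (ltn_ord i)) // bits.
have [n0 [rest [size_n0 sizes eq_w]]] := bit_accept_split (accept (Ordinal l_gt0)).
exists n0, rest; split=> //; apply/(chain_okE rest l_gt0 size_n0); split=> // k lt_kl.
by rewrite -(bit_accept_chainE lt_kl) // -eq_w; apply: accept (Ordinal lt_kl).
Qed.
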